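(* Let $\gamma\neq0$ be real and let $V(t,x)$ be an arbitrary smooth complex-valued function. Let $Q$ be any operator in the maximal Lie invariance algebra $A^{\max}(\gamma,V)$ of the equation $i\psi_t+\psi_{xx}+|\psi|^\gamma\psi+V\psi=0$. Then there exist smooth real functions $\xi(t),\chi(t),\lambda(t)$ such that $Q=D(\xi)+G(\chi)+\lambda M$. Moreover, these functions satisfy the classifying condition $$\xi V_t+\Big(\tfrac12\xi_t x+\chi\Big)V_x+\xi_t V=\tfrac18\xi_{ttt}x^2+\tfrac12\chi_{tt}x+\lambda_t+i\tfrac{\hat\gamma}{4}\xi_{tt},$$ where $\hat\gamma=(4-\gamma)/\gamma$.
   Context: $\psi(t,x)$ is a complex unknown function. Lie symmetries are vector fields $Q=\xi^t\partial_t+\xi^x\partial_x+\eta\partial_\psi+\eta^*\partial_{\psi^*}$ on the space of $(t,x,\psi,\psi^* )$, with $\psi^*$ (complex conjugate) treated as an independent variable and all coefficients allowed to depend on $t,x,\psi,\psi^*$. $A^{\max}(\gamma,V)$ is the Lie algebra of all such vector fields generating local point symmetries of the equation. Notation: - $M=i(\psi\partial_\psi-\psi^*\partial_{\psi^*})$ and $I=\psi\partial_\psi+\psi^*\partial_{\psi^*}$. - $D(\xi)=\xi\partial_t+\tfrac12\xi_t x\partial_x+\tfrac18\xi_{tt}x^2M-\tfrac1\gamma\xi_t I$. - $G(\chi)=\chi\partial_x+\tfrac12\chi_t xM$. *)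

From Stdlib Require Import Reals List.
From Coquelicot Require Import Coquelicot.
Open Scope R_scope.

Definition smooth1 (f : R -> R) : Prop :=
  forall (n : nat) (t : R), ex_derive (Derive_n f n) t.

Inductive dir4 := d1 | d2 | d3 | d4.

Definition pd4 (d : dir4) (f : R -> R -> R -> R -> R) : R -> R -> R -> R -> R :=
  match d with
  | d1 => fun t x u v => Derive (fun s => f s x u v) t
  | d2 => fun t x u v => Derive (fun s => f t s u v) x
  | d3 => fun t x u v => Derive (fun s => f t x s v) u
  | d4 => fun t x u v => Derive (fun s => f t x u s) v
  end.

Definition ex_pd4 (d : dir4) (f : R -> R -> R -> R -> R) (t x u v : R) : Prop :=
  match d with
  | d1 => ex_derive (fun s => f s x u v) t
  | d2 => ex_derive (fun s => f t s u v) x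
  | d3 => ex_derive (fun s => f t x s v) u
  | d4 => ex_derive (fun s => f t x u s) v
  end.

Definition iter_pd4 (ds : list dir4) (f : R -> R -> R -> R -> R) :=
  fold_right pd4 f ds.

Definition smooth_on4 (D : R -> R -> R -> R -> Prop)
    (f : R -> R -> R -> R -> R) : Prop :=
  forall (ds : list dir4) (t x u v : R), D t x u v ->
    (forall d, ex_pd4 d (iter_pd4 ds f) t x u v) /\
    continuous (fun p : R * R * R * R =>
                  iter_pd4 ds f (fst (fst (fst p))) (snd (fst (fst p)))
                                (snd (fst p)) (snd p)) (t, x, u, v).

Definition lift2 (f : R -> R -> R) : R -> R -> R -> R -> R :=
  fun t x _ _ => f t x.

Definition smooth2 (f : R -> R -> R) : Prop :=
  smooth_on4 (fun _ _ _ _ => True) (lift2 f).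

(* ---------- Second-order jet space ----------
   psi = u + i v ; coordinates t, x, u, v and the derivatives of u, v
   up to order two. *)
Inductive coord :=
  cT | cX | cU | cV | cUt | cUx | cVt | cVx
| cUtt | cUtx | cUxx | cVtt | cVtx | cVxx.

Definition coord_eq_dec (a b : coord) : {a = b} + {a <> b}.
Proof. decide equality. Defined.

Definition jet := coord -> R.

Definition upd (j : jet) (c : coord) (s : R) : jet :=
  fun c' => if coord_eq_dec c c' then s else j c'.

Definition pd (c : coord) (F : jet -> R) (j : jet) : R :=
  Derive (fun s => F (upd j c s)) (j c).

(* total derivatives (acting on functions of at most first-order jets) *)
Definition TotDx (F : jet -> R) (j : jet) : R :=
  pd cX F j + j cUx * pd cU F j + j cVx * pd cV F j
  + j cUtx * pd cUt F j + j cUxx * pd cUx F j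
  + j cVtx * pd cVt F j + j cVxx * pd cVx F j.

Definition TotDt (F : jet -> R) (j : jet) : R :=
  pd cT F j + j cUt * pd cU F j + j cVt * pd cV F j
  + j cUtt * pd cUt F j + j cUtx * pd cUx F j
  + j cVtt * pd cVt F j + j cVtx * pd cVx F j.

Definition lift4 (f : R -> R -> R -> R -> R) : jet -> R :=
  fun j => f (j cT) (j cX) (j cU) (j cV).

(* ---------- Vector fields ----------
   Q = tau d_t + xi d_x + eta d_psi + eta^* d_psi^*, written in the real
   coordinates psi = u + i v: eta = eu + i ev, so
   Q = tau d_t + xi d_x + eu d_u + ev d_v. *)
Record vfield := VField {
  vf_t : R -> R -> R -> R -> R;
  vf_x : R -> R -> R -> R -> R;
  vf_u : R -> R -> R -> R -> R;
  vf_v : R -> R -> R -> R -> R }.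

Section Prolong.
Variable Q : vfield.
Let tau := lift4 (vf_t Q).
Let xi := lift4 (vf_x Q).

(* prolongation coefficients for a dependent variable with characteristic
   coefficient eta and jet coordinates ct (= w_t), cx (= w_x), ctx, cxx *)
Definition pr_t (eta : jet -> R) (ct cx : coord) : jet -> R :=
  fun j => TotDt eta j - j ct * TotDt tau j - j cx * TotDt xi j.
Definition pr_x (eta : jet -> R) (ct cx : coord) : jet -> R :=
  fun j => TotDx eta j - j ct * TotDx tau j - j cx * TotDx xi j.
Definition pr_xx (eta : jet -> R) (ct cx ctx cxx : coord) : jet -> R :=
  fun j => TotDx (pr_x eta ct cx) j - j ctx * TotDx tau j - j cxx * TotDx xi j.

(* second prolongation of Q applied to a function F on J^2 that does not
   depend on the coordinates u_tt, u_tx, v_tt, v_tx (the terms with these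
   coordinates vanish for such F) *)
Definition prQ (F : jet -> R) (j : jet) : R :=
  let eu := lift4 (vf_u Q) in let ev := lift4 (vf_v Q) in
  tau j * pd cT F j + xi j * pd cX F j + eu j * pd cU F j + ev j * pd cV F j
  + pr_t eu cUt cUx j * pd cUt F j + pr_x eu cUt cUx j * pd cUx F j
  + pr_t ev cVt cVx j * pd cVt F j + pr_x ev cVt cVx j * pd cVx F j
  + pr_xx eu cUt cUx cUtx cUxx j * pd cUxx F j
  + pr_xx ev cVt cVx cVtx cVxx j * pd cVxx F j.
End Prolong.

(* ---------- The equation ----------
   i psi_t + psi_xx + |psi|^gamma psi + V psi = 0, with psi = u + i v,
   V = V1 + i V2, |psi|^gamma = (u^2+v^2)^(gamma/2); real and imaginary
   parts: *)
Definition absg (gamma : R) (j : jet) : R :=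
  Rpower (j cU ^ 2 + j cV ^ 2) (gamma / 2).

Definition Delta1 (gamma : R) (V1 V2 : R -> R -> R) (j : jet) : R :=
  - j cVt + j cUxx + (absg gamma j + V1 (j cT) (j cX)) * j cU
  - V2 (j cT) (j cX) * j cV.

Definition Delta2 (gamma : R) (V1 V2 : R -> R -> R) (j : jet) : R :=
  j cUt + j cVxx + (absg gamma j + V1 (j cT) (j cX)) * j cV
  + V2 (j cT) (j cX) * j cU.

(* domain: psi <> 0 (where |psi|^gamma is smooth) *)
Definition dom4 : R -> R -> R -> R -> Prop := fun _ _ u v => 0 < u ^ 2 + v ^ 2.

Definition is_Lie_sym (gamma : R) (V1 V2 : R -> R -> R) (Q : vfield) : Prop :=
  forall j : jet, 0 < j cU ^ 2 + j cV ^ 2 ->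
    Delta1 gamma V1 V2 j = 0 -> Delta2 gamma V1 V2 j = 0 ->
    prQ Q (Delta1 gamma V1 V2) j = 0 /\ prQ Q (Delta2 gamma V1 V2) j = 0.

Definition in_Amax (gamma : R) (V1 V2 : R -> R -> R) (Q : vfield) : Prop :=
  smooth_on4 dom4 (vf_t Q) /\ smooth_on4 dom4 (vf_x Q) /\
  smooth_on4 dom4 (vf_u Q) /\ smooth_on4 dom4 (vf_v Q) /\
  is_Lie_sym gamma V1 V2 Q.

(* the vector field D(xi) + G(chi) + lambda M in real coordinates:
   eta = (i a - b) psi with a = xi''/8 x^2 + chi'/2 x + lambda, b = xi'/gamma *)
Definition DGM (gamma : R) (xi chi lam : R -> R) : vfield :=
  VField (fun t _ _ _ => xi t)
         (fun t x _ _ => / 2 * Derive_n xi 1 t * x + chi t)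
         (fun t x u v =>
            - (/ 8 * Derive_n xi 2 t * x ^ 2 + / 2 * Derive_n chi 1 t * x + lam t) * v
            - Derive_n xi 1 t / gamma * u)
         (fun t x u v =>
            (/ 8 * Derive_n xi 2 t * x ^ 2 + / 2 * Derive_n chi 1 t * x + lam t) * u
            - Derive_n xi 1 t / gamma * v).

(* The invariance criterion, written on the solution manifold, is a polynomial
   identity in the free jet coordinates u_tx, u_xx, v_xx, u_x, v_x, and its
   coefficients are read off one after the other.  The u_tx coefficient makes the
   t-component depend on t only, say xi(t).  The u_xx and v_xx coefficients make
   the x-component equal to xi' x / 2 + chi(t) and impose the Cauchy-Riemann
   equations on the psi-component; with the u_x^2 and v_x^2 coefficients this
   component becomes (alpha - i beta) psi + zeta, and the v_x coefficient then
   gives beta = -(xi'' x^2 / 8 + chi' x / 2 + lambda).  What remains is an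
   identity |psi|^gamma A(psi) + B(psi) = 0 on psi <> 0, where A and B are sums
   of terms homogeneous of degree 0 and 1 in psi; comparing psi with 2 psi
   (2^gamma <> 1) makes A and B vanish, which yields alpha = -xi' / gamma,
   zeta = 0, and, as the coefficients of u and v in B, the real and imaginary
   parts of the classifying condition. *)

From Pilot Require Import Defs.
From Coquelicot Require Import Coquelicot.
From Stdlib Require Import Reals Lra List FunctionalExtensionality.
Open Scope R_scope.

(* Keeps auto_derive from unfolding partial derivatives, which ring and lra
   must see as atoms. *)
Arguments pd4 : simpl never.
Notation dT := Defs.d1.
Notation dX := Defs.d2.
Notation dU := Defs.d3.
Notation dV := Defs.d4.

(** * Calculus on the punctured plane *)

Lemma is_derive_0_const (f : R -> R) : (forall y, is_derive f y 0) -> forall a b, f a = f b.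
Proof.
  intros H a b.
  destruct (Rtotal_order a b) as [Hab | [-> | Hab]]; [| reflexivity | symmetry];
    apply eq_is_derive; auto.
Qed.

Lemma sum_sq_pos_l u v : u <> 0 -> 0 < u ^ 2 + v ^ 2.
Proof. intro Hu. assert (0 < u * u) by (destruct (Rtotal_order u 0) as [|[|]]; nra). nra. Qed.

Lemma sum_sq_pos_r u v : v <> 0 -> 0 < u ^ 2 + v ^ 2.
Proof. intro Hv. rewrite Rplus_comm. now apply sum_sq_pos_l. Qed.

Lemma sum_sq_1_0 : 0 < 1 ^ 2 + 0 ^ 2.
Proof. simpl. lra. Qed.

(* Every point of the punctured plane is joined to (1, 0) by at most three
   axis-parallel segments avoiding the origin. *)
Lemma punctured_plane_const (h : R -> R -> R) :
  (forall u v, 0 < u ^ 2 + v ^ 2 -> is_derive (fun s => h s v) u 0) ->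
  (forall u v, 0 < u ^ 2 + v ^ 2 -> is_derive (fun s => h u s) v 0) ->
  forall u v, 0 < u ^ 2 + v ^ 2 -> h u v = h 1 0.
Proof.
  intros Hu Hv u v Huv.
  assert (horizontal : forall v0, v0 <> 0 -> forall a b, h a v0 = h b v0).
  { intros v0 Hv0. apply (is_derive_0_const (fun s => h s v0)).
    intro y. apply Hu, sum_sq_pos_r, Hv0. }
  assert (vertical : forall u0, u0 <> 0 -> forall a b, h u0 a = h u0 b).
  { intros u0 Hu0. apply (is_derive_0_const (fun s => h u0 s)).
    intro y. apply Hv, sum_sq_pos_l, Hu0. }
  destruct (Req_dec v 0) as [-> | Hv0].
  - assert (Hu0 : u <> 0) by (intros ->; simpl in Huv; lra).
    rewrite (vertical u Hu0 0 1), (horizontal 1 ltac:(lra) u 1), (vertical 1 ltac:(lra) 1 0).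
    reflexivity.
  - rewrite (horizontal v Hv0 u 1). apply vertical. lra.
Qed.

Lemma locally_punctured_l u v :
  0 < u ^ 2 + v ^ 2 -> locally u (fun s => 0 < s ^ 2 + v ^ 2).
Proof.
  intro Huv. destruct (Req_dec v 0) as [-> | Hv].
  - assert (Hu : 0 < Rabs u) by (apply Rabs_pos_lt; intros ->; simpl in Huv; lra).
    exists (mkposreal _ Hu). intros y Hy. apply sum_sq_pos_l. intros ->.
    cbn in Hy. unfold AbsRing_ball, abs, minus, plus, opp in Hy; cbn in Hy.
    rewrite Rplus_0_l, Rabs_Ropp in Hy. lra.
  - exists (mkposreal _ Rlt_0_1). intros y _. apply sum_sq_pos_r, Hv.
Qed.

Lemma locally_punctured_r u v :
  0 < u ^ 2 + v ^ 2 -> locally v (fun s => 0 < u ^ 2 + s ^ 2).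
Proof.
  intro Huv. apply filter_imp with (fun s => 0 < s ^ 2 + u ^ 2); [intros; lra |].
  apply locally_punctured_l. lra.
Qed.

Lemma Rpower_1_base y : Rpower 1 y = 1.
Proof. unfold Rpower. now rewrite ln_1, Rmult_0_r, exp_0. Qed.

Lemma Rpower_sq_neq_1 x y : 1 < x -> y <> 0 -> Rpower x (y / 2) * Rpower x (y / 2) <> 1.
Proof.
  intros Hx Hy H. rewrite <- Rpower_plus in H. replace (y / 2 + y / 2) with y in H by field.
  unfold Rpower in H. rewrite <- exp_0 in H. apply exp_inv, Rmult_integral in H.
  assert (0 < ln x) by (rewrite <- ln_1; apply ln_increasing; lra).
  destruct H; [contradiction | lra].
Qed.

(* Sampling the identity on the circles of radius 1 and 2 separates the
   homogeneous parts of degree gamma and 0, since 4 ^ (gamma / 2) <> 1. *)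
Lemma power_identity_coeffs gamma a b c d e f :
  gamma <> 0 ->
  (forall u v, 0 < u ^ 2 + v ^ 2 ->
     Rpower (u ^ 2 + v ^ 2) (gamma / 2)
       * (a * u + b + gamma * u * (b * u + c * v) / (u ^ 2 + v ^ 2))
     + d + e * u + f * v = 0) ->
  a = 0 /\ b = 0 /\ c = 0 /\ d = 0 /\ e = 0 /\ f = 0.
Proof.
  intros Hg H.
  set (s := Rpower 2 (gamma / 2)).
  assert (Hs : s * s <> 1) by (apply Rpower_sq_neq_1; lra).
  assert (Hs0 : 0 < s) by apply exp_pos.
  assert (radius1 : forall u v, u ^ 2 + v ^ 2 = 1 ->
            a * u + b + gamma * u * (b * u + c * v) + d + e * u + f * v = 0).
  { intros u v Huv. specialize (H u v ltac:(lra)).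
    rewrite Huv, Rpower_1_base in H. rewrite <- H. field. }
  assert (radius2 : forall u v, u ^ 2 + v ^ 2 = 4 ->
            s * s * (a * u + b + gamma * u * (b * u + c * v) / 4) + d + e * u + f * v = 0).
  { intros u v Huv. specialize (H u v ltac:(lra)).
    rewrite Huv in H. unfold s. rewrite Rpower_mult_distr by lra.
    replace (2 * 2) with 4 by ring. exact H. }
  pose proof (radius1 1 0 ltac:(simpl; lra)). pose proof (radius1 (-1) 0 ltac:(simpl; lra)).
  pose proof (radius1 0 1 ltac:(simpl; lra)). pose proof (radius1 0 (-1) ltac:(simpl; lra)).
  pose proof (radius2 2 0 ltac:(simpl; lra)). pose proof (radius2 (-2) 0 ltac:(simpl; lra)).
  pose proof (radius2 0 2 ltac:(simpl; lra)). pose proof (radius2 0 (-2) ltac:(simpl; lra)).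
  assert (Ha : (s * s - 1) * a = 0) by lra.
  assert (Hb : (s * s - 1) * b = 0) by lra.
  apply Rmult_integral in Ha, Hb.
  destruct Ha as [Ha | ->]; [lra |]. destruct Hb as [Hb | ->]; [lra |].
  assert (Hc : s * gamma * c = 0).
  { specialize (H 1 1 ltac:(simpl; lra)). replace (1 ^ 2 + 1 ^ 2) with 2 in H by ring.
    fold s in H. assert (d = 0 /\ e = 0 /\ f = 0) as (-> & -> & ->) by lra.
    replace (s * gamma * c) with (2 * (s * (0 * 1 + 0 + gamma * 1 * (0 * 1 + c * 1) / 2)))
      by field.
    lra. }
  apply Rmult_integral in Hc. destruct Hc as [Hc | ->]; [| lra].
  apply Rmult_integral in Hc. destruct Hc; lra.
Qed.

(** * Smooth functions of (t, x, u, v) *)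

Lemma pd4_ext_punctured f g d t x u v :
  (forall t x u v, 0 < u ^ 2 + v ^ 2 -> f t x u v = g t x u v) ->
  0 < u ^ 2 + v ^ 2 -> pd4 d f t x u v = pd4 d g t x u v.
Proof.
  intros Hfg Huv. destruct d; cbv beta iota delta [pd4].
  - apply Derive_ext. intro. now apply Hfg.
  - apply Derive_ext. intro. now apply Hfg.
  - apply Derive_ext_loc. apply filter_imp with (2 := locally_punctured_l u v Huv).
    intros. now apply Hfg.
  - apply Derive_ext_loc. apply filter_imp with (2 := locally_punctured_r u v Huv).
    intros. now apply Hfg.
Qed.

Lemma smooth_on4_pd4 D d f : smooth_on4 D f -> smooth_on4 D (pd4 d f).
Proof.
  intros Hf ds. change (iter_pd4 ds (pd4 d f)) with (iter_pd4 ds (iter_pd4 (d :: nil) f)).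
  unfold iter_pd4. rewrite <- fold_right_app. apply Hf.
Qed.

Lemma smooth_on4_iter_pd4 D ds f : smooth_on4 D f -> smooth_on4 D (iter_pd4 ds f).
Proof. induction ds; [auto | intro Hf; apply smooth_on4_pd4; auto]. Qed.

Lemma smooth_on4_ex_pd4 D d f t x u v :
  smooth_on4 D f -> D t x u v -> ex_pd4 d f t x u v.
Proof. intros Hf HD. exact (proj1 (Hf nil t x u v HD) d). Qed.

Lemma smooth1_slice D f x u v :
  smooth_on4 D f -> (forall s, D s x u v) -> smooth1 (fun s => f s x u v).
Proof.
  intros Hf HD n t.
  assert (Hn : forall s, Derive_n (fun s => f s x u v) n s = iter_pd4 (repeat dT n) f s x u v).
  { induction n as [| n IH]; intro s; [reflexivity |].
    cbn. now rewrite (Derive_ext _ _ _ IH). }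
  apply ex_derive_ext with (fun s => iter_pd4 (repeat dT n) f s x u v).
  - intro. now rewrite Hn.
  - apply (smooth_on4_ex_pd4 D dT), HD. now apply smooth_on4_iter_pd4.
Qed.

Lemma smooth1_opp f : smooth1 f -> smooth1 (fun s => - f s).
Proof.
  intros Hf n t. apply ex_derive_ext with (fun s => - Derive_n f n s).
  - intro. now rewrite Derive_n_opp.
  - auto_derive. apply Hf.
Qed.

Lemma smooth2_ex_derive_t V t x : smooth2 V -> ex_derive (fun s => V s x) t.
Proof. intro HV. exact (smooth_on4_ex_pd4 _ dT _ t x 0 0 HV I). Qed.

Lemma smooth2_ex_derive_x V t x : smooth2 V -> ex_derive (fun s => V t s) x.
Proof. intro HV. exact (smooth_on4_ex_pd4 _ dX _ t x 0 0 HV I). Qed.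

Ltac fold_pd4 :=
  repeat match goal with
  | |- context [Derive (fun s => ?g s ?x ?u ?v) ?t] =>
      change (Derive (fun s => g s x u v) t) with (pd4 dT g t x u v)
  | |- context [Derive (fun s => ?g ?t s ?u ?v) ?x] =>
      change (Derive (fun s => g t s u v) x) with (pd4 dX g t x u v)
  | |- context [Derive (fun s => ?g ?t ?x s ?v) ?u] =>
      change (Derive (fun s => g t x s v) u) with (pd4 dU g t x u v)
  | |- context [Derive (fun s => ?g ?t ?x ?u s) ?v] =>
      change (Derive (fun s => g t x u s) v) with (pd4 dV g t x u v)
  end.

Ltac smooth_pd4 :=
  match goal with
  | |- smooth_on4 ?D (pd4 ?d ?f) => apply (smooth_on4_pd4 D d f); smooth_pd4
  | |- _ => assumption
  end.

Ltac ex_pd4_smooth d g t x u v :=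
  apply (smooth_on4_ex_pd4 dom4 d g t x u v); [smooth_pd4 | assumption].

Ltac ex_derive_smooth :=
  match goal with
  | |- ex_derive (fun s => ?V s ?x) ?t => apply (smooth2_ex_derive_t V t x); assumption
  | |- ex_derive (fun s => ?V ?t s) ?x => apply (smooth2_ex_derive_x V t x); assumption
  | |- ex_derive (fun s => ?g s ?x ?u ?v) ?t => ex_pd4_smooth dT g t x u v
  | |- ex_derive (fun s => ?g ?t s ?u ?v) ?x => ex_pd4_smooth dX g t x u v
  | |- ex_derive (fun s => ?g ?t ?x s ?v) ?u => ex_pd4_smooth dU g t x u v
  | |- ex_derive (fun s => ?g ?t ?x ?u s) ?v => ex_pd4_smooth dV g t x u v
  end.

Lemma affine_in_uv f (a b : R) t x u v :
  smooth_on4 dom4 f ->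
  (forall u v, 0 < u ^ 2 + v ^ 2 -> pd4 dU f t x u v = a /\ pd4 dV f t x u v = b) ->
  0 < u ^ 2 + v ^ 2 -> f t x u v = a * u + b * v + (f t x 1 0 - a).
Proof.
  intros Hf Hab Huv.
  enough (f t x u v - a * u - b * v = f t x 1 0 - a * 1 - b * 0) by lra.
  apply (punctured_plane_const (fun u v => f t x u v - a * u - b * v)); [| | exact Huv];
    intros u' v' H'; destruct (Hab u' v' H') as [Ha Hb].
  - auto_derive; [exact (smooth_on4_ex_pd4 dom4 dU f t x u' v' Hf H') |].
    fold_pd4. rewrite Ha. ring.
  - auto_derive; [exact (smooth_on4_ex_pd4 dom4 dV f t x u' v' Hf H') |].
    fold_pd4. rewrite Hb. ring.
Qed.

Lemma uv_const_of_pd4 f t x u v :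
  smooth_on4 dom4 f ->
  (forall u v, 0 < u ^ 2 + v ^ 2 -> pd4 dU f t x u v = 0 /\ pd4 dV f t x u v = 0) ->
  0 < u ^ 2 + v ^ 2 -> f t x u v = f t x 1 0.
Proof. intros Hf H0 Huv. rewrite (affine_in_uv f 0 0 t x u v Hf H0 Huv). ring. Qed.

Lemma slice_affine_in_x f (a : R) t x :
  smooth_on4 dom4 f -> (forall y, pd4 dX f t y 1 0 = a) -> f t x 1 0 = a * x + f t 0 1 0.
Proof.
  intros Hf Ha.
  assert (line : forall y, is_derive (fun y => f t y 1 0 - a * y) y 0).
  { intro y. auto_derive; [exact (smooth_on4_ex_pd4 dom4 dX f t y 1 0 Hf sum_sq_1_0) |].
    fold_pd4. rewrite Ha. ring. }
  pose proof (is_derive_0_const _ line x 0). lra.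
Qed.

Lemma pd4_of_time_only f (g : R -> R) d t x u v :
  (forall t x u v, 0 < u ^ 2 + v ^ 2 -> f t x u v = g t) -> d <> dT ->
  0 < u ^ 2 + v ^ 2 -> pd4 d f t x u v = 0.
Proof.
  intros Hfg Hd Huv. rewrite (pd4_ext_punctured f (fun t _ _ _ => g t) d t x u v Hfg Huv).
  destruct d; [congruence | ..]; cbv beta iota delta [pd4]; apply Derive_const.
Qed.

Definition pdx (g : R -> R -> R) t x := Derive (fun s => g t s) x.
Definition pdt (g : R -> R -> R) t x := Derive (fun s => g s x) t.

Lemma pd4_dX_affine_uv f a b c t x u v :
  (forall t x u v, 0 < u ^ 2 + v ^ 2 -> f t x u v = a t x * u + b t x * v + c t x) ->
  ex_derive (fun s => a t s) x -> ex_derive (fun s => b t s) x -> ex_derive (fun s => c t s) x ->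
  0 < u ^ 2 + v ^ 2 -> pd4 dX f t x u v = pdx a t x * u + pdx b t x * v + pdx c t x.
Proof.
  intros Hf Ha Hb Hc Huv. cbv beta iota delta [pd4].
  rewrite (Derive_ext _ (fun s => a t s * u + b t s * v + c t s)) by (intro; now apply Hf).
  apply is_derive_unique. auto_derive; [tauto | unfold pdx; ring].
Qed.

Lemma pd4_dT_affine_uv f a b c t x u v :
  (forall t x u v, 0 < u ^ 2 + v ^ 2 -> f t x u v = a t x * u + b t x * v + c t x) ->
  ex_derive (fun s => a s x) t -> ex_derive (fun s => b s x) t -> ex_derive (fun s => c s x) t ->
  0 < u ^ 2 + v ^ 2 -> pd4 dT f t x u v = pdt a t x * u + pdt b t x * v + pdt c t x.
Proof.
  intros Hf Ha Hb Hc Huv. cbv beta iota delta [pd4].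
  rewrite (Derive_ext _ (fun s => a s x * u + b s x * v + c s x)) by (intro; now apply Hf).
  apply is_derive_unique. auto_derive; [tauto | unfold pdt; ring].
Qed.

(** * Prolongation *)

Notation "f @@ j" := (f (j cT) (j cX) (j cU) (j cV)) (at level 10).

Definition totx (f : R -> R -> R -> R -> R) (t x u v ux vx : R) : R :=
  pd4 dX f t x u v + ux * pd4 dU f t x u v + vx * pd4 dV f t x u v.

Definition tott (f : R -> R -> R -> R -> R) (t x u v ut vt : R) : R :=
  pd4 dT f t x u v + ut * pd4 dU f t x u v + vt * pd4 dV f t x u v.

Definition totxx (f : R -> R -> R -> R -> R) (t x u v ux vx uxx vxx : R) : R :=
  totx (pd4 dX f) t x u v ux vx + ux * totx (pd4 dU f) t x u v ux vx
  + vx * totx (pd4 dV f) t x u v ux vx + uxx * pd4 dU f t x u v + vxx * pd4 dV f t x u v.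

Lemma tot_affine_in_x f (a b : R -> R) t x u v :
  (forall t x u v, 0 < u ^ 2 + v ^ 2 -> f t x u v = a t * x + b t) ->
  ex_derive a t -> ex_derive b t -> 0 < u ^ 2 + v ^ 2 ->
  (forall ut vt, tott f t x u v ut vt = Derive a t * x + Derive b t) /\
  (forall ux vx, totx f t x u v ux vx = a t) /\
  (forall ux vx uxx vxx, totxx f t x u v ux vx uxx vxx = 0).
Proof.
  intros Hf Ha Hb Huv.
  assert (Hf' : forall d t x u v, 0 < u ^ 2 + v ^ 2 ->
            pd4 d f t x u v = pd4 d (fun t x _ _ => a t * x + b t) t x u v)
    by (intros; now apply pd4_ext_punctured).
  assert (fX : forall t x u v, 0 < u ^ 2 + v ^ 2 -> pd4 dX f t x u v = a t).
  { intros. rewrite Hf' by auto. cbv beta iota delta [pd4].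
    apply is_derive_unique. auto_derive; [exact I | ring]. }
  assert (fU : forall t x u v, 0 < u ^ 2 + v ^ 2 -> pd4 dU f t x u v = 0)
    by (intros; rewrite Hf' by auto; cbv beta iota delta [pd4]; apply Derive_const).
  assert (fV : forall t x u v, 0 < u ^ 2 + v ^ 2 -> pd4 dV f t x u v = 0)
    by (intros; rewrite Hf' by auto; cbv beta iota delta [pd4]; apply Derive_const).
  assert (fT : pd4 dT f t x u v = Derive a t * x + Derive b t).
  { rewrite Hf' by auto. cbv beta iota delta [pd4].
    apply is_derive_unique. auto_derive; [tauto |].
    change (fun s => a s) with a; change (fun s => b s) with b. ring. }
  assert (second : forall d d', d <> dT -> d' <> dT -> pd4 d (pd4 d' f) t x u v = 0).
  { intros d d' Hd Hd'.
    destruct d'; [congruence | ..].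
    - exact (pd4_of_time_only _ a d t x u v fX Hd Huv).
    - exact (pd4_of_time_only _ (fun _ => 0) d t x u v fU Hd Huv).
    - exact (pd4_of_time_only _ (fun _ => 0) d t x u v fV Hd Huv). }
  split; [intros; unfold tott; rewrite fT, fU, fV by auto; ring |].
  split; [intros; unfold totx; rewrite fX, fU, fV by auto; ring |].
  intros. unfold totxx, totx. rewrite fU, fV, !second by (auto || discriminate). ring.
Qed.

(* The value 0 for u_tt and v_tt is arbitrary: prQ never depends on them. *)
Definition mk_jet (t x u v ut ux vt vx utx uxx vtx vxx : R) : jet :=
  fun c => match c with
  | cT => t | cX => x | cU => u | cV => v
  | cUt => ut | cUx => ux | cVt => vt | cVx => vx
  | cUtx => utx | cUxx => uxx | cVtx => vtx | cVxx => vxx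
  | cUtt | cVtt => 0
  end.

Ltac unfold_upd :=
  cbv beta iota delta [upd coord_eq_dec coord_rec coord_rect sumbool_rec sumbool_rect].

Lemma pd_is_derive c F j l : is_derive (fun s => F (upd j c s)) (j c) l -> pd c F j = l.
Proof. apply is_derive_unique. Qed.

Ltac eval_pd :=
  repeat (erewrite pd_is_derive;
    [| unfold_upd; auto_derive;
       [repeat split; try exact I; try ex_derive_smooth; simpl; nra | reflexivity]]).

Lemma TotDx_lift4 f j : TotDx (lift4 f) j = (totx f @@ j) (j cUx) (j cVx).
Proof.
  unfold TotDx, pd, lift4. unfold_upd. rewrite !Derive_const.
  unfold totx. cbv beta iota delta [pd4]. ring.
Qed.

Lemma TotDt_lift4 f j : TotDt (lift4 f) j = (tott f @@ j) (j cUt) (j cVt).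
Proof.
  unfold TotDt, pd, lift4. unfold_upd. rewrite !Derive_const.
  unfold tott. cbv beta iota delta [pd4]. ring.
Qed.

Lemma pr_t_lift4 Q e ct cx j :
  pr_t Q (lift4 e) ct cx j =
  (tott e @@ j) (j cUt) (j cVt) - j ct * (tott (vf_t Q) @@ j) (j cUt) (j cVt)
  - j cx * (tott (vf_x Q) @@ j) (j cUt) (j cVt).
Proof. unfold pr_t. now rewrite !TotDt_lift4. Qed.

Lemma pr_x_lift4 Q e ct cx j :
  pr_x Q (lift4 e) ct cx j =
  (totx e @@ j) (j cUx) (j cVx) - j ct * (totx (vf_t Q) @@ j) (j cUx) (j cVx)
  - j cx * (totx (vf_x Q) @@ j) (j cUx) (j cVx).
Proof. unfold pr_x. now rewrite !TotDx_lift4. Qed.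

Lemma pr_xx_lift4 Q e ct cx ctx cxx j :
  (ct, cx, ctx, cxx) = (cUt, cUx, cUtx, cUxx) \/ (ct, cx, ctx, cxx) = (cVt, cVx, cVtx, cVxx) ->
  smooth_on4 dom4 e -> smooth_on4 dom4 (vf_t Q) -> smooth_on4 dom4 (vf_x Q) ->
  0 < j cU ^ 2 + j cV ^ 2 ->
  pr_xx Q (lift4 e) ct cx ctx cxx j =
  (totxx e @@ j) (j cUx) (j cVx) (j cUxx) (j cVxx)
  - 2 * j ctx * (totx (vf_t Q) @@ j) (j cUx) (j cVx)
  - j ct * (totxx (vf_t Q) @@ j) (j cUx) (j cVx) (j cUxx) (j cVxx)
  - 2 * j cxx * (totx (vf_x Q) @@ j) (j cUx) (j cVx)
  - j cx * (totxx (vf_x Q) @@ j) (j cUx) (j cVx) (j cUxx) (j cVxx).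
Proof.
  intros Hc He Ht Hx Huv.
  assert (Hpr : pr_x Q (lift4 e) ct cx = fun j =>
    (totx e @@ j) (j cUx) (j cVx) - j ct * (totx (vf_t Q) @@ j) (j cUx) (j cVx)
    - j cx * (totx (vf_x Q) @@ j) (j cUx) (j cVx)).
  { extensionality j'. apply pr_x_lift4. }
  unfold pr_xx. rewrite Hpr, !TotDx_lift4.
  destruct Hc as [Hc | Hc]; injection Hc as -> -> -> ->;
    unfold TotDx, totx; eval_pd; fold_pd4; unfold totxx, totx; ring.
Qed.

Lemma prQ_Delta1 gamma V1 V2 Q j :
  smooth2 V1 -> smooth2 V2 -> 0 < j cU ^ 2 + j cV ^ 2 ->
  prQ Q (Delta1 gamma V1 V2) j =
    vf_t Q @@ j * (Derive (fun s => V1 s (j cX)) (j cT) * j cU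
                   - Derive (fun s => V2 s (j cX)) (j cT) * j cV)
  + vf_x Q @@ j * (Derive (fun s => V1 (j cT) s) (j cX) * j cU
                   - Derive (fun s => V2 (j cT) s) (j cX) * j cV)
  + vf_u Q @@ j * (absg gamma j + gamma * j cU ^ 2 * absg gamma j / (j cU ^ 2 + j cV ^ 2)
                   + V1 (j cT) (j cX))
  + vf_v Q @@ j * (gamma * j cU * j cV * absg gamma j / (j cU ^ 2 + j cV ^ 2) - V2 (j cT) (j cX))
  - pr_t Q (lift4 (vf_v Q)) cVt cVx j + pr_xx Q (lift4 (vf_u Q)) cUt cUx cUtx cUxx j.
Proof.
  intros HV1 HV2 Huv. unfold prQ, Delta1, absg, Rpower. cbv zeta. eval_pd.
  unfold lift4.
  replace (j cU * (j cU * 1) + j cV * (j cV * 1)) with (j cU ^ 2 + j cV ^ 2) by ring.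
  field. lra.
Qed.

Lemma prQ_Delta2 gamma V1 V2 Q j :
  smooth2 V1 -> smooth2 V2 -> 0 < j cU ^ 2 + j cV ^ 2 ->
  prQ Q (Delta2 gamma V1 V2) j =
    vf_t Q @@ j * (Derive (fun s => V1 s (j cX)) (j cT) * j cV
                   + Derive (fun s => V2 s (j cX)) (j cT) * j cU)
  + vf_x Q @@ j * (Derive (fun s => V1 (j cT) s) (j cX) * j cV
                   + Derive (fun s => V2 (j cT) s) (j cX) * j cU)
  + vf_u Q @@ j * (gamma * j cU * j cV * absg gamma j / (j cU ^ 2 + j cV ^ 2) + V2 (j cT) (j cX))
  + vf_v Q @@ j * (absg gamma j + gamma * j cV ^ 2 * absg gamma j / (j cU ^ 2 + j cV ^ 2)
                   + V1 (j cT) (j cX))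
  + pr_t Q (lift4 (vf_u Q)) cUt cUx j + pr_xx Q (lift4 (vf_v Q)) cVt cVx cVtx cVxx j.
Proof.
  intros HV1 HV2 Huv. unfold prQ, Delta2, absg, Rpower. cbv zeta. eval_pd.
  unfold lift4.
  replace (j cU * (j cU * 1) + j cV * (j cV * 1)) with (j cU ^ 2 + j cV ^ 2) by ring.
  field. lra.
Qed.

(** * Solving the determining equations *)

Section Classification.

Variables (gamma : R) (V1 V2 : R -> R -> R) (Q : vfield).
Hypotheses (V1_smooth : smooth2 V1) (V2_smooth : smooth2 V2).
Hypotheses (Qt_smooth : smooth_on4 dom4 (vf_t Q)) (Qx_smooth : smooth_on4 dom4 (vf_x Q))
  (Qu_smooth : smooth_on4 dom4 (vf_u Q)) (Qv_smooth : smooth_on4 dom4 (vf_v Q)).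
Hypothesis Q_sym : is_Lie_sym gamma V1 V2 Q.
Hypothesis gamma_neq0 : gamma <> 0.

Local Notation qt := (vf_t Q).
Local Notation qx := (vf_x Q).
Local Notation qu := (vf_u Q).
Local Notation qv := (vf_v Q).
Local Notation pw u v := (Rpower (u ^ 2 + v ^ 2) (gamma / 2)).

Lemma determining_equations t x u v ut ux vt vx utx uxx vtx vxx :
  0 < u ^ 2 + v ^ 2 ->
  ut = - vxx - (pw u v + V1 t x) * v - V2 t x * u ->
  vt = uxx + (pw u v + V1 t x) * u - V2 t x * v ->
  qt t x u v * (Derive (fun s => V1 s x) t * u - Derive (fun s => V2 s x) t * v)
  + qx t x u v * (Derive (fun s => V1 t s) x * u - Derive (fun s => V2 t s) x * v)
  + qu t x u v * (pw u v + gamma * u ^ 2 * pw u v / (u ^ 2 + v ^ 2) + V1 t x)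
  + qv t x u v * (gamma * u * v * pw u v / (u ^ 2 + v ^ 2) - V2 t x)
  - (tott qv t x u v ut vt - vt * tott qt t x u v ut vt - vx * tott qx t x u v ut vt)
  + (totxx qu t x u v ux vx uxx vxx - 2 * utx * totx qt t x u v ux vx
     - ut * totxx qt t x u v ux vx uxx vxx - 2 * uxx * totx qx t x u v ux vx
     - ux * totxx qx t x u v ux vx uxx vxx) = 0 /\
  qt t x u v * (Derive (fun s => V1 s x) t * v + Derive (fun s => V2 s x) t * u)
  + qx t x u v * (Derive (fun s => V1 t s) x * v + Derive (fun s => V2 t s) x * u)
  + qu t x u v * (gamma * u * v * pw u v / (u ^ 2 + v ^ 2) + V2 t x)
  + qv t x u v * (pw u v + gamma * v ^ 2 * pw u v / (u ^ 2 + v ^ 2) + V1 t x)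
  + (tott qu t x u v ut vt - ut * tott qt t x u v ut vt - ux * tott qx t x u v ut vt)
  + (totxx qv t x u v ux vx uxx vxx - 2 * vtx * totx qt t x u v ux vx
     - vt * totxx qt t x u v ux vx uxx vxx - 2 * vxx * totx qx t x u v ux vx
     - vx * totxx qx t x u v ux vx uxx vxx) = 0.
Proof.
  intros Huv Hut Hvt.
  set (j := mk_jet t x u v ut ux vt vx utx uxx vtx vxx).
  destruct (Q_sym j Huv) as [E1 E2].
  - unfold Delta1, absg, j. cbv beta iota delta [mk_jet]. rewrite Hvt. ring.
  - unfold Delta2, absg, j. cbv beta iota delta [mk_jet]. rewrite Hut. ring.
  - rewrite prQ_Delta1, pr_t_lift4, pr_xx_lift4 in E1 by (auto; now left).
    rewrite prQ_Delta2, pr_t_lift4, pr_xx_lift4 in E2 by (auto; now right).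
    split; [exact E1 | exact E2].
Qed.

Lemma qt_partials t x u v :
  0 < u ^ 2 + v ^ 2 ->
  pd4 dX qt t x u v = 0 /\ pd4 dU qt t x u v = 0 /\ pd4 dV qt t x u v = 0.
Proof.
  intro Huv.
  assert (coeff_utx : forall ux vx, totx qt t x u v ux vx = 0).
  { intros ux vx.
    destruct (determining_equations t x u v _ ux _ vx 1 0 0 0 Huv eq_refl eq_refl) as [E1 _].
    destruct (determining_equations t x u v _ ux _ vx 0 0 0 0 Huv eq_refl eq_refl) as [E0 _].
    lra. }
  pose proof (coeff_utx 0 0). pose proof (coeff_utx 1 0). pose proof (coeff_utx 0 1).
  unfold totx in *. repeat split; lra.
Qed.

Definition xi t := qt t 0 1 0.

Lemma qt_eq t x u v : 0 < u ^ 2 + v ^ 2 -> qt t x u v = xi t.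
Proof.
  intro Huv. rewrite (uv_const_of_pd4 qt t x u v Qt_smooth); [| | exact Huv].
  - rewrite (slice_affine_in_x qt 0 t x Qt_smooth); [unfold xi; ring |].
    intro y. now destruct (qt_partials t y 1 0 sum_sq_1_0) as (-> & _).
  - intros u' v' H'. now destruct (qt_partials t x u' v' H') as (_ & -> & ->).
Qed.

Lemma xi_smooth : smooth1 xi.
Proof. apply (smooth1_slice dom4); [exact Qt_smooth | intro; exact sum_sq_1_0]. Qed.

Lemma tot_qt t x u v :
  0 < u ^ 2 + v ^ 2 ->
  (forall ut vt, tott qt t x u v ut vt = Derive xi t) /\
  (forall ux vx, totx qt t x u v ux vx = 0) /\
  (forall ux vx uxx vxx, totxx qt t x u v ux vx uxx vxx = 0).
Proof.
  intro Huv.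
  destruct (tot_affine_in_x qt (fun _ => 0) xi t x u v) as (HT & HX & HXX).
  - intros. rewrite qt_eq by auto. ring.
  - apply ex_derive_const.
  - apply xi_smooth with (n := 0%nat).
  - exact Huv.
  - repeat split; intros; auto. rewrite HT, Derive_const. ring.
Qed.

Lemma qx_partials_cauchy_riemann t x u v :
  0 < u ^ 2 + v ^ 2 ->
  pd4 dU qx t x u v = 0 /\ pd4 dV qx t x u v = 0 /\ 2 * pd4 dX qx t x u v = Derive xi t
  /\ pd4 dU qu t x u v = pd4 dV qv t x u v /\ pd4 dV qu t x u v = - pd4 dU qv t x u v.
Proof.
  intro Huv. destruct (tot_qt t x u v Huv) as (Tt & Tx & Txx).
  assert (coeffs : forall ux vx,
    pd4 dU qu t x u v - pd4 dV qv t x u v + Derive xi t - 2 * pd4 dX qx t x u v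
      - 3 * ux * pd4 dU qx t x u v - vx * pd4 dV qx t x u v = 0 /\
    pd4 dU qv t x u v + pd4 dV qu t x u v - vx * pd4 dU qx t x u v
      - ux * pd4 dV qx t x u v = 0 /\
    pd4 dV qv t x u v - pd4 dU qu t x u v + Derive xi t - 2 * pd4 dX qx t x u v
      - ux * pd4 dU qx t x u v - 3 * vx * pd4 dV qx t x u v = 0).
  { intros ux vx.
    destruct (determining_equations t x u v _ ux _ vx 0 1 0 0 Huv eq_refl eq_refl) as [E1 _].
    destruct (determining_equations t x u v _ ux _ vx 0 0 0 1 Huv eq_refl eq_refl) as [F1 F2].
    destruct (determining_equations t x u v _ ux _ vx 0 0 0 0 Huv eq_refl eq_refl) as [E0 F0].
    rewrite !Tt, !Tx, !Txx in *. unfold tott, totxx, totx in *. repeat split; lra. }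
  destruct (coeffs 0 0) as (A0 & B0 & C0), (coeffs 1 0) as (A1 & _ & _),
    (coeffs 0 1) as (A2 & _ & _).
  repeat split; lra.
Qed.

Definition chi t := qx t 0 1 0.

Lemma chi_smooth : smooth1 chi.
Proof. apply (smooth1_slice dom4); [exact Qx_smooth | intro; exact sum_sq_1_0]. Qed.

Lemma qx_eq t x u v : 0 < u ^ 2 + v ^ 2 -> qx t x u v = Derive xi t * x / 2 + chi t.
Proof.
  intro Huv. rewrite (uv_const_of_pd4 qx t x u v Qx_smooth); [| | exact Huv].
  - rewrite (slice_affine_in_x qx (Derive xi t / 2) t x Qx_smooth); [unfold chi; field |].
    intro y. destruct (qx_partials_cauchy_riemann t y 1 0 sum_sq_1_0) as (_ & _ & HX & _). lra.
  - intros u' v' H'. now destruct (qx_partials_cauchy_riemann t x u' v' H') as (-> & -> & _).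
Qed.

Lemma tot_qx t x u v :
  0 < u ^ 2 + v ^ 2 ->
  (forall ut vt, tott qx t x u v ut vt = Derive (Derive xi) t * x / 2 + Derive chi t) /\
  (forall ux vx, totx qx t x u v ux vx = Derive xi t / 2) /\
  (forall ux vx uxx vxx, totxx qx t x u v ux vx uxx vxx = 0).
Proof.
  intro Huv.
  assert (Hxi1 : ex_derive (Derive xi) t) by exact (xi_smooth 1%nat t).
  destruct (tot_affine_in_x qx (fun t => Derive xi t / 2) chi t x u v) as (HT & HX & HXX).
  - intros. rewrite qx_eq by auto. field.
  - auto_derive. exact Hxi1.
  - exact (chi_smooth 0%nat t).
  - exact Huv.
  - repeat split; intros; auto. rewrite HT.
    replace (Derive (fun t => Derive xi t / 2) t) with (Derive (Derive xi) t / 2).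
    + field.
    + symmetry. apply is_derive_unique. auto_derive; [exact Hxi1 |].
      change (fun s => Derive xi s) with (Derive xi). field.
Qed.

Lemma qu_qv_second_partials t x u v :
  0 < u ^ 2 + v ^ 2 ->
  pd4 dU (pd4 dU qu) t x u v = 0 /\ pd4 dV (pd4 dV qu) t x u v = 0 /\
  pd4 dU (pd4 dU qv) t x u v = 0 /\ pd4 dV (pd4 dV qv) t x u v = 0 /\
  pd4 dX (pd4 dV qu) t x u v + pd4 dV (pd4 dX qu) t x u v
    + (Derive (Derive xi) t * x / 2 + Derive chi t) = 0.
Proof.
  intro Huv. destruct (tot_qt t x u v Huv) as (Tt & Tx & Txx).
  destruct (tot_qx t x u v Huv) as (Xt & Xx & Xxx).
  destruct (determining_equations t x u v _ 0 _ 0 0 0 0 0 Huv eq_refl eq_refl) as [E0 F0].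
  destruct (determining_equations t x u v _ 1 _ 0 0 0 0 0 Huv eq_refl eq_refl) as [E1 F1].
  destruct (determining_equations t x u v _ (-1) _ 0 0 0 0 0 Huv eq_refl eq_refl) as [E2 F2].
  destruct (determining_equations t x u v _ 0 _ 1 0 0 0 0 Huv eq_refl eq_refl) as [E3 F3].
  destruct (determining_equations t x u v _ 0 _ (-1) 0 0 0 0 Huv eq_refl eq_refl) as [E4 F4].
  rewrite !Tt, !Tx, !Txx, !Xt, !Xx, !Xxx in *. unfold tott, totxx, totx in *.
  repeat split; lra.
Qed.

Definition alpha t x := pd4 dU qu t x 1 0.
Definition beta t x := pd4 dV qu t x 1 0.

Lemma qu_qv_first_partials t x u v :
  0 < u ^ 2 + v ^ 2 ->
  pd4 dU qu t x u v = alpha t x /\ pd4 dV qu t x u v = beta t x /\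
  pd4 dU qv t x u v = - beta t x /\ pd4 dV qv t x u v = alpha t x.
Proof.
  intro Huv.
  assert (CR1 : forall d t x u v, 0 < u ^ 2 + v ^ 2 ->
            pd4 d (pd4 dU qu) t x u v = pd4 d (pd4 dV qv) t x u v).
  { intros d t' x' u' v' H'. apply pd4_ext_punctured; [| exact H'].
    intros t0 x0 u0 v0 H0.
    now destruct (qx_partials_cauchy_riemann t0 x0 u0 v0 H0) as (_ & _ & _ & -> & _). }
  assert (CR2 : forall d t x u v, 0 < u ^ 2 + v ^ 2 ->
            pd4 d (pd4 dV qu) t x u v = - pd4 d (pd4 dU qv) t x u v).
  { intros d t' x' u' v' H'.
    rewrite (pd4_ext_punctured _ (fun t x u v => - pd4 dU qv t x u v) d t' x' u' v');
      [| | exact H'].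
    - destruct d; cbv beta iota delta [pd4]; apply Derive_opp.
    - intros t0 x0 u0 v0 H0.
      now destruct (qx_partials_cauchy_riemann t0 x0 u0 v0 H0) as (_ & _ & _ & _ & ->). }
  assert (Ha : pd4 dU qu t x u v = alpha t x).
  { apply (uv_const_of_pd4 (pd4 dU qu)); [now apply smooth_on4_pd4 | | exact Huv].
    intros u' v' H'. rewrite (CR1 dV t x u' v' H').
    destruct (qu_qv_second_partials t x u' v' H') as (? & _ & _ & ? & _). split; lra. }
  assert (Hb : pd4 dV qu t x u v = beta t x).
  { apply (uv_const_of_pd4 (pd4 dV qu)); [now apply smooth_on4_pd4 | | exact Huv].
    intros u' v' H'. rewrite (CR2 dU t x u' v' H').
    destruct (qu_qv_second_partials t x u' v' H') as (_ & ? & ? & _). split; lra. }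
  destruct (qx_partials_cauchy_riemann t x u v Huv) as (_ & _ & _ & ? & ?).
  repeat split; lra.
Qed.

Definition zeta_u t x := qu t x 1 0 - alpha t x.
Definition zeta_v t x := qv t x 1 0 + beta t x.

Lemma qu_eq t x u v :
  0 < u ^ 2 + v ^ 2 -> qu t x u v = alpha t x * u + beta t x * v + zeta_u t x.
Proof.
  intro Huv. apply (affine_in_uv qu (alpha t x) (beta t x) t x u v Qu_smooth); [| exact Huv].
  intros u' v' H'. now destruct (qu_qv_first_partials t x u' v' H') as (-> & -> & _).
Qed.

Lemma qv_eq t x u v :
  0 < u ^ 2 + v ^ 2 -> qv t x u v = - beta t x * u + alpha t x * v + zeta_v t x.
Proof.
  intro Huv.
  rewrite (affine_in_uv qv (- beta t x) (alpha t x) t x u v Qv_smooth); [| | exact Huv].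
  - unfold zeta_v. ring.
  - intros u' v' H'. now destruct (qu_qv_first_partials t x u' v' H') as (_ & _ & -> & ->).
Qed.

Lemma pdx_zeta_u t x : pdx zeta_u t x = pd4 dX qu t x 1 0 - pd4 dX (pd4 dU qu) t x 1 0.
Proof.
  pose proof sum_sq_1_0 as H10. unfold pdx, zeta_u, alpha.
  apply is_derive_unique. auto_derive; [repeat split; ex_derive_smooth | fold_pd4; ring].
Qed.

Lemma pd4_dX_qu t x u v :
  0 < u ^ 2 + v ^ 2 ->
  pd4 dX qu t x u v = pdx alpha t x * u + pdx beta t x * v + pdx zeta_u t x.
Proof.
  pose proof sum_sq_1_0 as H10. apply pd4_dX_affine_uv; [exact qu_eq | | |];
    unfold zeta_u, alpha, beta; auto_derive; repeat split; ex_derive_smooth.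
Qed.

Lemma pd4_dX_dX_qu t x u v :
  0 < u ^ 2 + v ^ 2 ->
  pd4 dX (pd4 dX qu) t x u v
  = pdx (pdx alpha) t x * u + pdx (pdx beta) t x * v + pdx (pdx zeta_u) t x.
Proof.
  pose proof sum_sq_1_0 as H10. apply pd4_dX_affine_uv; [exact pd4_dX_qu | | |].
  - exact (smooth_on4_ex_pd4 dom4 dX (pd4 dX (pd4 dU qu)) t x 1 0 ltac:(smooth_pd4) H10).
  - exact (smooth_on4_ex_pd4 dom4 dX (pd4 dX (pd4 dV qu)) t x 1 0 ltac:(smooth_pd4) H10).
  - apply ex_derive_ext with (fun s => pd4 dX qu t s 1 0 - pd4 dX (pd4 dU qu) t s 1 0).
    + intro. symmetry. apply pdx_zeta_u.
    + auto_derive. repeat split; ex_derive_smooth.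
Qed.

Lemma pd4_dT_qv t x u v :
  0 < u ^ 2 + v ^ 2 ->
  pd4 dT qv t x u v = - pdt beta t x * u + pdt alpha t x * v + pdt zeta_v t x.
Proof.
  intro Huv. pose proof sum_sq_1_0 as H10.
  rewrite (pd4_dT_affine_uv qv (fun t x => - beta t x) alpha zeta_v t x u v);
    [| exact qv_eq | ..];
    try (unfold zeta_v, alpha, beta; auto_derive; repeat split; ex_derive_smooth).
  - unfold pdt. rewrite Derive_opp. ring.
  - exact Huv.
Qed.

Definition lam t := - beta t 0.

Lemma beta_eq t x :
  beta t x = - (Derive (Derive xi) t * x ^ 2 / 8 + Derive chi t * x / 2 + lam t).
Proof.
  pose proof sum_sq_1_0 as H10.
  assert (pdx_beta : forall y,
            2 * pdx beta t y + (Derive (Derive xi) t * y / 2 + Derive chi t) = 0).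
  { intro y. destruct (qu_qv_second_partials t y 1 0 H10) as (_ & _ & _ & _ & Hmix).
    rewrite (pd4_ext_punctured (pd4 dX qu)
               (fun t x u v => pdx alpha t x * u + pdx beta t x * v + pdx zeta_u t x)) in Hmix
      by (exact pd4_dX_qu || exact H10).
    change (pd4 dX (pd4 dV qu) t y 1 0) with (pdx beta t y) in Hmix.
    cbv beta iota delta [pd4] in Hmix.
    replace (Derive (fun s => pdx alpha t y * 1 + pdx beta t y * s + pdx zeta_u t y) 0)
      with (pdx beta t y) in Hmix
      by (apply eq_sym, is_derive_unique; auto_derive; [exact I | ring]).
    lra. }
  assert (line : forall y, is_derive
            (fun y => beta t y + Derive (Derive xi) t * y ^ 2 / 8 + Derive chi t * y / 2) y 0).
  { intro y. specialize (pdx_beta y).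
    auto_derive; [unfold beta; ex_derive_smooth |].
    unfold pdx in pdx_beta. lra. }
  pose proof (is_derive_0_const _ line x 0) as Hx0. unfold lam. simpl in Hx0. lra.
Qed.

Definition residual_re t x :=
  xi t * Derive (fun s => V1 s x) t
  + (Derive xi t * x / 2 + chi t) * Derive (fun s => V1 t s) x
  + Derive xi t * V1 t x + pdt beta t x + pdx (pdx alpha) t x.

Definition residual_im t x :=
  - (xi t * Derive (fun s => V2 s x) t
     + (Derive xi t * x / 2 + chi t) * Derive (fun s => V2 t s) x + Derive xi t * V2 t x)
  - pdt alpha t x + pdx (pdx beta) t x.

Definition residual_0 t x :=
  - pdt zeta_v t x + pdx (pdx zeta_u) t x + zeta_u t x * V1 t x - zeta_v t x * V2 t x.

Lemma zero_order_identity t x u v :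
  0 < u ^ 2 + v ^ 2 ->
  pw u v * ((gamma * alpha t x + Derive xi t) * u + zeta_u t x
            + gamma * u * (zeta_u t x * u + zeta_v t x * v) / (u ^ 2 + v ^ 2))
  + residual_0 t x + residual_re t x * u + residual_im t x * v = 0.
Proof.
  intro Huv.
  destruct (tot_qt t x u v Huv) as (Tt & Tx & Txx).
  destruct (tot_qx t x u v Huv) as (Xt & Xx & Xxx).
  destruct (determining_equations t x u v _ 0 _ 0 0 0 0 0 Huv eq_refl eq_refl) as [E _].
  rewrite Tt, Tx, Txx, Xt, Xx, Xxx in E. unfold tott, totxx, totx in E.
  destruct (qu_qv_first_partials t x u v Huv) as (Huu & Huv' & Hvu & Hvv).
  rewrite (qt_eq t x u v Huv), (qx_eq t x u v Huv), (qu_eq t x u v Huv), (qv_eq t x u v Huv),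
    (pd4_dX_dX_qu t x u v Huv), (pd4_dT_qv t x u v Huv), Huu, Huv', Hvu, Hvv in E.
  rewrite <- E. unfold residual_0, residual_re, residual_im. field. lra.
Qed.

Lemma zero_order_coeffs t x :
  gamma * alpha t x + Derive xi t = 0 /\ zeta_u t x = 0 /\ zeta_v t x = 0 /\
  residual_re t x = 0 /\ residual_im t x = 0.
Proof.
  destruct (power_identity_coeffs gamma _ _ _ _ _ _ gamma_neq0 (zero_order_identity t x))
    as (? & ? & ? & _ & ? & ?).
  repeat split; assumption.
Qed.

Lemma alpha_eq t x : alpha t x = - Derive xi t / gamma.
Proof. destruct (zero_order_coeffs t x) as (H & _). field_simplify_eq; lra. Qed.

Lemma lam_smooth : smooth1 lam.
Proof.
  apply smooth1_opp, (smooth1_slice dom4); [now apply smooth_on4_pd4 | intro; exact sum_sq_1_0].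
Qed.

Lemma Q_eq_DGM t x u v :
  dom4 t x u v ->
  qt t x u v = vf_t (DGM gamma xi chi lam) t x u v /\
  qx t x u v = vf_x (DGM gamma xi chi lam) t x u v /\
  qu t x u v = vf_u (DGM gamma xi chi lam) t x u v /\
  qv t x u v = vf_v (DGM gamma xi chi lam) t x u v.
Proof.
  intro Huv. destruct (zero_order_coeffs t x) as (_ & Hzu & Hzv & _).
  cbn [DGM vf_t vf_x vf_u vf_v].
  change (Derive_n xi 1 t) with (Derive xi t).
  change (Derive_n xi 2 t) with (Derive (Derive xi) t).
  change (Derive_n chi 1 t) with (Derive chi t).
  rewrite (qt_eq t x u v Huv), (qx_eq t x u v Huv), (qu_eq t x u v Huv), (qv_eq t x u v Huv),
    alpha_eq, beta_eq, Hzu, Hzv.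
  repeat split; field; exact gamma_neq0.
Qed.

Lemma pdt_beta t x :
  pdt beta t x
  = - (Derive (Derive (Derive xi)) t * x ^ 2 / 8 + Derive (Derive chi) t * x / 2 + Derive lam t).
Proof.
  unfold pdt.
  rewrite (Derive_ext _ (fun s => - (Derive (Derive xi) s * x ^ 2 / 8 + Derive chi s * x / 2
                                     + lam s))) by (intro; apply beta_eq).
  apply is_derive_unique. auto_derive.
  - repeat split;
      [exact (xi_smooth 2%nat t) | exact (chi_smooth 1%nat t) | exact (lam_smooth 0%nat t)].
  - change (fun s => Derive (Derive xi) s) with (Derive (Derive xi)).
    change (fun s => Derive chi s) with (Derive chi). change (fun s => lam s) with lam. field.
Qed.

Lemma pdx_pdx_beta t x : pdx (pdx beta) t x = - Derive (Derive xi) t / 4.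
Proof.
  unfold pdx.
  rewrite (Derive_ext _ (fun y => - (Derive (Derive xi) t * y / 4 + Derive chi t / 2))).
  - apply is_derive_unique. auto_derive; [exact I | field].
  - intro y.
    rewrite (Derive_ext _ (fun z => - (Derive (Derive xi) t * z ^ 2 / 8 + Derive chi t * z / 2
                                       + lam t))) by (intro; apply beta_eq).
    apply is_derive_unique. auto_derive; [exact I | field].
Qed.

Lemma pdt_alpha t x : pdt alpha t x = - Derive (Derive xi) t / gamma.
Proof.
  unfold pdt. rewrite (Derive_ext _ (fun s => - Derive xi s / gamma)) by (intro; apply alpha_eq).
  apply is_derive_unique. auto_derive; [exact (xi_smooth 1%nat t) |].
  change (fun s => Derive xi s) with (Derive xi). field. exact gamma_neq0.
Qed.

Lemma pdx_pdx_alpha t x : pdx (pdx alpha) t x = 0.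
Proof.
  unfold pdx. rewrite (Derive_ext _ (fun _ => 0)); [apply Derive_const |].
  intro. rewrite (Derive_ext _ (fun _ => - Derive xi t / gamma)) by (intro; apply alpha_eq).
  apply Derive_const.
Qed.

Lemma classifying_condition t x :
  xi t * Derive (fun s => V1 s x) t
  + (/ 2 * Derive_n xi 1 t * x + chi t) * Derive (fun s => V1 t s) x
  + Derive_n xi 1 t * V1 t x
  = / 8 * Derive_n xi 3 t * x ^ 2 + / 2 * Derive_n chi 2 t * x + Derive_n lam 1 t /\
  xi t * Derive (fun s => V2 s x) t
  + (/ 2 * Derive_n xi 1 t * x + chi t) * Derive (fun s => V2 t s) x
  + Derive_n xi 1 t * V2 t x
  = (4 - gamma) / gamma / 4 * Derive_n xi 2 t.
Proof.
  destruct (zero_order_coeffs t x) as (_ & _ & _ & Hre & Him).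
  unfold residual_re, residual_im in Hre, Him.
  rewrite pdt_beta, pdx_pdx_alpha in Hre. rewrite pdt_alpha, pdx_pdx_beta in Him.
  change (Derive_n xi 1 t) with (Derive xi t).
  change (Derive_n xi 2 t) with (Derive (Derive xi) t).
  change (Derive_n xi 3 t) with (Derive (Derive (Derive xi)) t).
  change (Derive_n chi 2 t) with (Derive (Derive chi) t).
  change (Derive_n lam 1 t) with (Derive lam t).
  split; [lra |].
  replace ((4 - gamma) / gamma / 4 * Derive (Derive xi) t)
    with (Derive (Derive xi) t / gamma - Derive (Derive xi) t / 4) by (field; exact gamma_neq0).
  lra.
Qed.

End Classification.

Theorem theorem1 (gamma : R) (V1 V2 : R -> R -> R) (Q : vfield) :
  gamma <> 0 -> smooth2 V1 -> smooth2 V2 ->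
  in_Amax gamma V1 V2 Q ->
  exists xi chi lam : R -> R,
    smooth1 xi /\ smooth1 chi /\ smooth1 lam /\
    (forall t x u v, dom4 t x u v ->
       vf_t Q t x u v = vf_t (DGM gamma xi chi lam) t x u v /\
       vf_x Q t x u v = vf_x (DGM gamma xi chi lam) t x u v /\
       vf_u Q t x u v = vf_u (DGM gamma xi chi lam) t x u v /\
       vf_v Q t x u v = vf_v (DGM gamma xi chi lam) t x u v) /\
    (forall t x : R,
       (* real part of the classifying condition *)
       xi t * Derive (fun s => V1 s x) t
       + (/ 2 * Derive_n xi 1 t * x + chi t) * Derive (fun s => V1 t s) x
       + Derive_n xi 1 t * V1 t x
       = / 8 * Derive_n xi 3 t * x ^ 2 + / 2 * Derive_n chi 2 t * x
         + Derive_n lam 1 t /\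
       (* imaginary part of the classifying condition *)
       xi t * Derive (fun s => V2 s x) t
       + (/ 2 * Derive_n xi 1 t * x + chi t) * Derive (fun s => V2 t s) x
       + Derive_n xi 1 t * V2 t x
       = (4 - gamma) / gamma / 4 * Derive_n xi 2 t).
Proof.
  intros Hgamma HV1 HV2 (Ht & Hx & Hu & Hv & Hsym).
  exists (xi Q), (chi Q), (lam Q).
  split; [exact (xi_smooth Q Ht) |].
  split; [exact (chi_smooth Q Hx) |].
  split; [exact (lam_smooth Q Hu) |].
  split.
  - exact (Q_eq_DGM gamma V1 V2 Q HV1 HV2 Ht Hx Hu Hv Hsym Hgamma).
  - exact (classifying_condition gamma V1 V2 Q HV1 HV2 Ht Hx Hu Hv Hsym Hgamma).
Qed.
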